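(* For every $k\in\mathbb N^+$, $P_2\le P_k$ (i.e. $P_2$ pp constructs $P_k$).
   Context: $P_k$ is the directed path with vertex set $\{0,\dots,k-1\}$ and edges $(i,i+1)$ for $0\le i<k-1$. A primitive positive formula is $\exists y_1,\dots,y_n(\psi_1\wedge\dots\wedge\psi_m)$ where each $\psi_i$ is $\bot$, $z_1=z_2$, or $E(z_1,z_2)$. For a digraph $H=(V,E)$, a pp power of dimension $d$ is the digraph on $V^d$ with edge set $\{(u,v):\phi(u_1,\dots,u_d,v_1,\dots,v_d)\text{ holds in }H\}$ for a pp formula $\phi$. $H\le G$ means $G$ is homomorphically equivalent (homomorphisms in both directions) to a pp power of $H$. *)

From mathcomp Require Import all_boot.
Set Implicit Arguments. Unset Strict Implicit. Unset Printing Implicit Defensive.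

Record digraph := Digraph { vert : Type; edge : vert -> vert -> Prop }.

Definition path_digraph (k : nat) : digraph :=
  @Digraph 'I_k (fun i j : 'I_k => (nat_of_ord i).+1 = nat_of_ord j).

Inductive atom (X : Type) :=
  | ABot : atom X
  | AEq : X -> X -> atom X
  | AEdge : X -> X -> atom X.

(* Variables of a pp formula defining a pp power of dimension d with n
   existentially quantified variables: the free variables u_1..u_d (inl (inl i)),
   v_1..v_d (inl (inr i)) and the quantified y_1..y_n (inr j). *)
Definition ppvar (d n : nat) : Type := ('I_d + 'I_d + 'I_n)%type.

(* A primitive positive formula with 2d free variables
   exists y_1..y_n (psi_1 /\ ... /\ psi_m). *)
Record ppformula (d : nat) := PPFormula {
  pp_nex : nat;
  pp_atoms : seq (atom (ppvar d pp_nex)) }.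

Definition atom_holds (G : digraph) (X : Type) (env : X -> vert G) (a : atom X) : Prop :=
  match a with
  | ABot => False
  | AEq x y => env x = env y
  | AEdge x y => edge (env x) (env y)
  end.

Definition ppvar_env (G : digraph) (d n : nat)
  (u v : 'I_d -> vert G) (y : 'I_n -> vert G) (z : ppvar d n) : vert G :=
  match z with
  | inl (inl i) => u i
  | inl (inr i) => v i
  | inr j => y j
  end.

Arguments atom_holds : clear implicits.
Definition pp_holds (G : digraph) (d : nat) (phi : ppformula d)
  (u v : 'I_d -> vert G) : Prop :=
  exists y : 'I_(pp_nex phi) -> vert G,
    foldr (fun a P => atom_holds G _ (ppvar_env u v y) a /\ P) True (pp_atoms phi).

Arguments pp_holds : clear implicits.
Definition pp_power (G : digraph) (d : nat) (phi : ppformula d) : digraph :=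
  @Digraph ('I_d -> vert G) (fun u v => pp_holds G d phi u v).

Definition hom (G H : digraph) (f : vert G -> vert H) : Prop :=
  forall x y, edge x y -> edge (f x) (f y).

Definition hom_equiv (G H : digraph) : Prop :=
  (exists f, @hom G H f) /\ (exists g, @hom H G g).

Arguments pp_power : clear implicits.
Definition pp_constructs (H G : digraph) : Prop :=
  exists (d : nat) (phi : ppformula d), hom_equiv G (pp_power H d phi).

From mathcomp Require Import all_boot.

Set Implicit Arguments.
Unset Strict Implicit.
Unset Printing Implicit Defensive.

(* Write a vertex i of P_(n+2) in unary, as the 0/1 vector of length n+1 whose
   first i entries are 1.  Over P_2 a pp formula can say that v is u shifted
   right by one place, with a 1 inserted in front and a 0 dropped at the end;
   this adds exactly one 1, so counting ones maps such edges back onto the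
   edges of P_(n+2).  P_1 has no edges and is equivalent to the empty pp power
   defined by bottom. *)

Lemma foldr_and_map (A : eqType) (B : Type) (Q : B -> Prop) (f : A -> B)
    (s : seq A) :
  foldr (fun b P => Q b /\ P) True (map f s) <-> {in s, forall x, Q (f x)}.
Proof.
elim: s => [|a s IHs] /=; first by split.
split=> [[Qa /IHs Qs] x|Qas]; first by rewrite in_cons => /predU1P [->|/Qs].
split; first by apply: Qas; rewrite mem_head.
by apply/IHs => x sx; apply: Qas; rewrite in_cons sx orbT.
Qed.

Lemma pp_constructs_edgeless (H G : digraph) (g0 : vert G) :
  (forall x y : vert G, ~ edge x y) -> pp_constructs H G.
Proof.
move=> no_edge; exists 0, (@PPFormula 0 0 [:: ABot _]); split.
  by exists (fun _ (i : 'I_0) => False_rect _ (notF (ltn_ord i))) => x y /no_edge.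
by exists (fun _ => g0) => u v [y []].
Qed.

Lemma path_digraph1_edgeless (x y : 'I_1) : ~ @edge (path_digraph 1) x y.
Proof. by move=> /= xy; have := ltn_ord y; rewrite -xy. Qed.

Definition shift_formula (n : nat) : ppformula n.+1 :=
  @PPFormula n.+1 2
    [:: AEdge (inr ord0) (inl (inr ord0)),
        AEdge (inl (inl ord_max)) (inr ord_max)
      & map (fun j : 'I_n => AEq (inl (inl (widen_ord (leqnSn n) j)))
                                  (inl (inr (lift ord0 j)))) (enum 'I_n)].

Lemma shift_formulaP (n : nat) (u v : 'I_n.+1 -> 'I_2) :
  pp_holds (path_digraph 2) n.+1 (shift_formula n) u v <->
  [/\ v ord0 = 1 :> nat, u ord_max = 0 :> nat
    & forall j : 'I_n, u (widen_ord (leqnSn n) j) = v (lift ord0 j)].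
Proof.
split=> [[y /= [y0v0 [un_y1 /foldr_and_map shift]]]|[v0 un shift]].
  split=> [||j]; last exact: shift (mem_enum _ j).
    by have := ltn_ord (v ord0); rewrite -y0v0 !ltnS leqn0 => /eqP ->.
  by have := ltn_ord (y ord_max); rewrite -un_y1 !ltnS leqn0 => /eqP.
exists (fun j => if j == ord0 then ord0 else ord_max) => /=.
by rewrite v0 un; split=> //; split=> //; apply/foldr_and_map => j _; apply: shift.
Qed.

Definition shift_power (n : nat) : digraph :=
  pp_power (path_digraph 2) n.+1 (shift_formula n).

Definition unary_code (n : nat) (i : 'I_n.+2) : 'I_n.+1 -> 'I_2 :=
  fun j => if j < i then ord_max else ord0.

Definition count_ones (m : nat) (u : 'I_m -> 'I_2) : nat := \sum_(j < m) (u j : nat).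

Lemma count_ones_le (m : nat) (u : 'I_m -> 'I_2) : count_ones u <= m.
Proof.
rewrite -[m in _ <= m]card_ord -sum1_card.
by apply: leq_sum => j _; rewrite -ltnS.
Qed.

Lemma count_ones_shift (n : nat) (u v : 'I_n.+1 -> 'I_2) :
    @edge (shift_power n) u v -> count_ones v = (count_ones u).+1.
Proof.
move=> /shift_formulaP [v0 un shift].
rewrite /count_ones [in LHS]big_ord_recl [in RHS]big_ord_recr /= un v0 addn0 add1n.
by congr _.+1; apply: eq_bigr => j _; rewrite shift.
Qed.

Lemma unary_code_hom (n : nat) :
  @hom (path_digraph n.+2) (shift_power n) (@unary_code n).
Proof.
move=> i i' /= ii'; apply/shift_formulaP; rewrite /unary_code.
have i_le_n : i <= n by rewrite -2!ltnS ii'.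
by split=> [||j]; rewrite -?ii' //= ltnNge i_le_n.
Qed.

Lemma count_ones_hom (n : nat) :
  @hom (shift_power n) (path_digraph n.+2)
      (fun u => inord (count_ones u)).
Proof.
move=> u v uv /=.
have := count_ones_le v; rewrite (count_ones_shift uv) => Su_le.
by rewrite !inordK ?ltnS // ltnW.
Qed.

Lemma shift_power_hom_equiv (n : nat) :
  hom_equiv (path_digraph n.+2) (shift_power n).
Proof.
split; first by exists (@unary_code n); apply: unary_code_hom.
by exists (fun u => inord (count_ones u)); apply: count_ones_hom.
Qed.

Theorem mainTheorem5 (k : nat) (hk : 0 < k) :
  pp_constructs (path_digraph 2) (path_digraph k).
Proof.
case: k hk => [//|[|n]] _.
  exact: (@pp_constructs_edgeless _ (path_digraph 1) ord0 path_digraph1_edgeless).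
by exists n.+1, (shift_formula n); apply: shift_power_hom_equiv.
Qed.
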